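(* Let $F$ be a field of characteristic not $2$. Then every PC-map $\mathrm{UT}(3,F)\to\mathrm{UT}(3,F)$ is a composition of a permutable PC-map, a field automorphism, and a central PC-map.
   Context: $\mathrm{UT}(3,F)$ is the group of upper unitriangular $3\times3$ matrices over $F$; $a_{ij}$ denotes the $(i,j)$ entry, $e_{ij}$ the matrix unit, $t_{ij}(\alpha)=e+\alpha e_{ij}$. $[x,y]=xyx^{-1}y^{-1}$. A PC-map is a bijection $\varphi$ of the group with $\varphi([x,y])=[\varphi(x),\varphi(y)]$ for all $x,y$. A permutable PC-map is a map of the form $a\mapsto\begin{pmatrix}1&\alpha a_{12}+\beta a_{23}&(\alpha\delta-\beta\gamma)a_{13}\\0&1&\gamma a_{12}+\delta a_{23}\\0&0&1\end{pmatrix}$ with fixed $\alpha,\beta,\gamma,\delta\in F$, $\alpha\delta-\beta\gamma\ne0$. A field automorphism of $\mathrm{UT}(3,F)$ is the map $(a_{ij})\mapsto(\theta(a_{ij}))$ for a field automorphism $\theta$ of $F$. A central PC-map is a PC-map of the form $a\mapsto a\,t_{13}(f(a))$ for some function $f:\mathrm{UT}(3,F)\to F$. *)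

From HB Require Import structures.
From mathcomp Require Import all_boot all_order all_algebra.
Set Implicit Arguments. Unset Strict Implicit. Unset Printing Implicit Defensive.
Import GRing.Theory.
Local Open Scope ring_scope.

Section UT3.
Variable F : fieldType.

Definition UT3 (a : 'M[F]_3) : Prop :=
  forall i j : 'I_3, (i == j -> a i j = 1) /\ ((j < i)%N -> a i j = 0).

(* the unitriangular matrix with entries a12 = x, a23 = y, a13 = z *)
Definition ut3 (x y z : F) : 'M[F]_3 :=
  \matrix_(i < 3, j < 3)
    if i == j then 1
    else if ((i == 0%N :> nat) && (j == 1%N :> nat)) then x
    else if ((i == 1%N :> nat) && (j == 2%N :> nat)) then y
    else if ((i == 0%N :> nat) && (j == 2%N :> nat)) then z
    else 0.

Definition i0 : 'I_3 := @Ordinal 3 0 isT.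
Definition i1 : 'I_3 := @Ordinal 3 1 isT.
Definition i2 : 'I_3 := @Ordinal 3 2 isT.

(* entries a_12, a_13, a_23 (1-based, as in the paper) *)
Definition a12 (a : 'M[F]_3) : F := a i0 i1.
Definition a13 (a : 'M[F]_3) : F := a i0 i2.
Definition a23 (a : 'M[F]_3) : F := a i1 i2.

Definition t13 (c : F) : 'M[F]_3 := ut3 0 0 c.

Definition comm3 (x y : 'M[F]_3) : 'M[F]_3 := x * y * x^-1 * y^-1.

(* PC-map: bijection of UT(3,F) preserving commutators.  The map is given as a
   function on all 3x3 matrices; only its restriction to UT(3,F) matters. *)
Definition PCmap (phi : 'M[F]_3 -> 'M[F]_3) : Prop :=
  [/\ (forall x, UT3 x -> UT3 (phi x)),
      (forall x y, UT3 x -> UT3 y -> phi x = phi y -> x = y),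
      (forall y, UT3 y -> exists x, UT3 x /\ phi x = y) &
      (forall x y, UT3 x -> UT3 y -> phi (comm3 x y) = comm3 (phi x) (phi y))].

Definition permutable_map (al be ga de : F) (a : 'M[F]_3) : 'M[F]_3 :=
  ut3 (al * a12 a + be * a23 a) (ga * a12 a + de * a23 a)
      ((al * de - be * ga) * a13 a).

Definition field_aut_map (theta : {rmorphism F -> F}) (a : 'M[F]_3) : 'M[F]_3 :=
  map_mx theta a.

Definition central_map (f : 'M[F]_3 -> F) (a : 'M[F]_3) : 'M[F]_3 :=
  a * t13 (f a).

End UT3.

From HB Require Import structures.
From mathcomp Require Import all_boot all_order all_algebra ring.
Import GRing.Theory.
Local Open Scope ring_scope.
Set Implicit Arguments. Unset Strict Implicit. Unset Printing Implicit Defensive.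

(** The commutator of two unitriangular matrices [a], [b] is central, with
    corner entry [symp a b = a12 a * a23 b - a12 b * a23 a], the determinant form
    on the abelianization [F^2].  A PC-map [phi] therefore maps the centre to
    itself by an injective map [g], and, [phi] being onto, the class of [phi a]
    modulo the centre depends only on [(a12 a, a23 a)]; call this induced map
    [psi].  Then [g (det (u, v)) = det (psi u, psi v)].  Evaluating this identity
    on the standard basis shows that [psi = M o (theta x theta)], with [M] the
    matrix of [psi] on the basis and [theta = g / g 1], and that [theta] preserves
    [det] on [F^2], hence is additive and multiplicative: a field automorphism,
    onto because [psi] is.  So [phi] agrees modulo the centre with the permutable
    map of [M] composed with [theta]; the central discrepancy is a central map,
    which is a PC-map because the other two factors are. *)

Local Ltac ut3_entrywise :=
  apply/matrixP => -[[|[|[|?]]] ?] // -[[|[|[|?]]] ?] //; rewrite !mxE //=.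

Section UT3Calculus.
Variable F : fieldType.
Implicit Types (x y z c : F) (a b : 'M[F]_3).

Lemma ut3_mul x y z x' y' z' :
  ut3 x y z * ut3 x' y' z' = ut3 (x + x') (y + y') (z + z' + x * y').
Proof.
apply/matrixP => i j; rewrite !mxE !big_ord_recr big_ord0 /= !mxE.
by case: i => [[|[|[|i]]] ?] //; case: j => [[|[|[|j]]] ?] //=; ring.
Qed.

Lemma ut3_inv x y z : (ut3 x y z)^-1 = ut3 (- x) (- y) (x * y - z).
Proof.
have mulVut3 : ut3 (- x) (- y) (x * y - z) * ut3 x y z = 1.
  by rewrite ut3_mul; ut3_entrywise; ring.
have ut3_unit : ut3 x y z \is a GRing.unit.
  by apply/GRing.unitrP; exists (ut3 (- x) (- y) (x * y - z)); split;
    rewrite // ut3_mul; ut3_entrywise; ring.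
by rewrite -[RHS]mulr1 -(divrr ut3_unit) mulrA mulVut3 mul1r.
Qed.

Lemma comm3_ut3 x y z x' y' z' :
  comm3 (ut3 x y z) (ut3 x' y' z') = ut3 0 0 (x * y' - x' * y).
Proof. by rewrite /comm3 !ut3_inv !ut3_mul; congr ut3; ring. Qed.

Lemma ut3_UT3 x y z : UT3 (ut3 x y z).
Proof. by move=> i j; rewrite !mxE; case: i => [[|[|[|i]]] ?] //; case: j => [[|[|[|j]]] ?]. Qed.

Lemma UT3E a : UT3 a -> a = ut3 (a12 a) (a23 a) (a13 a).
Proof.
move=> Ua; apply/matrixP => i j; have [Ua_diag Ua_low] := Ua i j; rewrite !mxE.
case: i Ua_diag Ua_low => [[|[|[|i]]] ?] //; case: j => [[|[|[|j]]] ?] //= Ua_diag Ua_low;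
  first [ by rewrite Ua_diag | by rewrite Ua_low
        | by rewrite /a12 /a13 /a23; congr (a _ _); apply: val_inj ].
Qed.

Lemma a12_ut3 x y z : a12 (ut3 x y z) = x. Proof. by rewrite /a12 mxE. Qed.
Lemma a23_ut3 x y z : a23 (ut3 x y z) = y. Proof. by rewrite /a23 mxE. Qed.
Lemma a13_ut3 x y z : a13 (ut3 x y z) = z. Proof. by rewrite /a13 mxE. Qed.

Lemma ut3_inj x y z x' y' z' :
  ut3 x y z = ut3 x' y' z' -> [/\ x = x', y = y' & z = z'].
Proof.
move=> E; split.
- by rewrite -(a12_ut3 x y z) E a12_ut3.
- by rewrite -(a23_ut3 x y z) E a23_ut3.
- by rewrite -(a13_ut3 x y z) E a13_ut3.
Qed.

Lemma mul_ut3_t13 x y z c : ut3 x y z * t13 c = ut3 x y (z + c).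
Proof. by rewrite /t13 ut3_mul; congr ut3; ring. Qed.

Lemma map_mx_ut3 (theta : {rmorphism F -> F}) x y z :
  map_mx theta (ut3 x y z) = ut3 (theta x) (theta y) (theta z).
Proof. by ut3_entrywise; rewrite ?rmorph0 ?rmorph1. Qed.

Lemma central_map_UT3 (f : 'M[F]_3 -> F) a : UT3 a -> UT3 (central_map f a).
Proof. by move=> Ua; rewrite /central_map (UT3E Ua) mul_ut3_t13; apply: ut3_UT3. Qed.

Definition symp a b := a12 a * a23 b - a12 b * a23 a.

Lemma symp_ut3 x y z x' y' z' : symp (ut3 x y z) (ut3 x' y' z') = x * y' - x' * y.
Proof. by rewrite /symp !a12_ut3 !a23_ut3. Qed.

Lemma comm3_UT3 a b : UT3 a -> UT3 b -> comm3 a b = ut3 0 0 (symp a b).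
Proof. by move=> Ua Ub; rewrite (UT3E Ua) (UT3E Ub) comm3_ut3 symp_ut3. Qed.

Lemma UT3_comm3 a b : UT3 a -> UT3 b -> UT3 (comm3 a b).
Proof. by move=> Ua Ub; rewrite comm3_UT3 //; apply: ut3_UT3. Qed.

End UT3Calculus.

Lemma det2_inj (F : fieldType) (al be ga de u v u' v' : F) :
  al * de - be * ga != 0 ->
  al * u + be * v = al * u' + be * v' -> ga * u + de * v = ga * u' + de * v' ->
  u = u' /\ v = v'.
Proof.
move=> det_neq0 Eab Egd.
have Cramer_u : (al * de - be * ga) * (u - u')
    = de * (al * u + be * v - (al * u' + be * v'))
      - be * (ga * u + de * v - (ga * u' + de * v')) by ring.
have Cramer_v : (al * de - be * ga) * (v - v')
    = al * (ga * u + de * v - (ga * u' + de * v'))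
      - ga * (al * u + be * v - (al * u' + be * v')) by ring.
rewrite Eab Egd !subrr !mulr0 subr0 in Cramer_u Cramer_v.
move/eqP: Cramer_u; move/eqP: Cramer_v.
by rewrite !mulf_eq0 (negPf det_neq0) /= !subr_eq0 => /eqP -> /eqP ->.
Qed.

Lemma inj_surj_bij (T : choiceType) (U : eqType) (f : T -> U) :
  injective f -> (forall y, exists x, f x = y) -> bijective f.
Proof.
move=> f_inj f_surj.
have f_surjb y : exists x, f x == y by have [x <-] := f_surj y; exists x.
exists (fun y => xchoose (f_surjb y)) => [x|y]; last exact/eqP/(xchooseP (f_surjb y)).
by apply: f_inj; apply/eqP/(xchooseP (f_surjb (f x))).
Qed.

Lemma PCmap_factor (F : fieldType) (phi P c : 'M[F]_3 -> 'M[F]_3) :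
  PCmap phi ->
  (forall a, UT3 a -> UT3 (P a)) ->
  (forall a b, UT3 a -> UT3 b -> P a = P b -> a = b) ->
  (forall a b, UT3 a -> UT3 b -> P (comm3 a b) = comm3 (P a) (P b)) ->
  (forall a, UT3 a -> UT3 (c a)) ->
  (forall a, UT3 a -> phi a = P (c a)) ->
  PCmap c.
Proof.
move=> [_ phi_inj phi_surj phi_comm] P_UT3 P_inj P_comm c_UT3 phiE; split=> //.
- by move=> a b Ua Ub Ec; apply: phi_inj; rewrite // !phiE // Ec.
- move=> y Uy; have [a [Ua Ea]] := phi_surj _ (P_UT3 _ Uy).
  by exists a; split=> //; apply: P_inj => //; [exact: c_UT3 | rewrite -phiE].
- move=> a b Ua Ub; have Uab := UT3_comm3 Ua Ub.
  apply: P_inj; [exact: c_UT3 | exact: UT3_comm3 (c_UT3 _ Ua) (c_UT3 _ Ub) |].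
  by rewrite -phiE // phi_comm // !phiE // P_comm //; apply: c_UT3.
Qed.

Section PermutableAutomorphism.
Variables (F : fieldType) (al be ga de : F) (theta : {rmorphism F -> F}).
Hypotheses (det_neq0 : al * de - be * ga != 0) (theta_inj : injective theta).

Let P a := permutable_map al be ga de (field_aut_map theta a).

Lemma permutable_aut_ut3 x y z :
  P (ut3 x y z) = ut3 (al * theta x + be * theta y) (ga * theta x + de * theta y)
                      ((al * de - be * ga) * theta z).
Proof. by rewrite /P /permutable_map /field_aut_map map_mx_ut3 a12_ut3 a23_ut3 a13_ut3. Qed.

Lemma permutable_aut_inj a b : UT3 a -> UT3 b -> P a = P b -> a = b.
Proof.
move=> Ua Ub; rewrite (UT3E Ua) (UT3E Ub) !permutable_aut_ut3 => /ut3_inj[E12 E23 E13].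
have [/theta_inj -> /theta_inj ->] := det2_inj det_neq0 E12 E23.
by move/(mulfI det_neq0)/theta_inj: E13 ->.
Qed.

Lemma permutable_aut_comm3 a b : UT3 a -> UT3 b -> P (comm3 a b) = comm3 (P a) (P b).
Proof.
move=> Ua Ub; rewrite (UT3E Ua) (UT3E Ub) comm3_ut3 !permutable_aut_ut3 comm3_ut3.
by congr ut3; rewrite ?rmorph0 ?rmorphB ?rmorphM; ring.
Qed.

End PermutableAutomorphism.

Section SymplecticPair.
Variables (F : fieldType) (g : F -> F) (X Y : F -> F -> F).
Hypothesis g_det : forall x y x' y',
  g (x * y' - x' * y) = X x y * Y x' y' - X x' y' * Y x y.
Hypothesis g_inj : injective g.

Let g_detE c x y x' y' :
  c = x * y' - x' * y -> g c = X x y * Y x' y' - X x' y' * Y x y.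
Proof. by move=> ->. Qed.

Lemma symp_g0 : g 0 = 0.
Proof. by have := g_det 0 0 0 0; rewrite mul0r !subrr. Qed.

Lemma symp_g1_det : g 1 = X 1 0 * Y 0 1 - X 0 1 * Y 1 0.
Proof. by apply: g_detE; ring. Qed.

Lemma symp_g1_neq0 : g 1 != 0.
Proof. by apply/eqP; rewrite -symp_g0 => /g_inj/eqP; rewrite oner_eq0. Qed.

Let g_first x y : g x = X x y * Y 0 1 - X 0 1 * Y x y.
Proof. by apply: g_detE; ring. Qed.

Let g_second x y : g y = X 1 0 * Y x y - X x y * Y 1 0.
Proof. by apply: g_detE; ring. Qed.

Definition symp_scale c := g c / g 1.

Let det_neq0 : X 1 0 * Y 0 1 - X 0 1 * Y 1 0 != 0.
Proof. by rewrite -symp_g1_det symp_g1_neq0. Qed.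

Lemma symp_X x y : X x y = X 1 0 * symp_scale x + X 0 1 * symp_scale y.
Proof. by rewrite /symp_scale (g_first x y) (g_second x y) symp_g1_det; field. Qed.

Lemma symp_Y x y : Y x y = Y 1 0 * symp_scale x + Y 0 1 * symp_scale y.
Proof. by rewrite /symp_scale (g_first x y) (g_second x y) symp_g1_det; field. Qed.

Lemma symp_scale_det x y x' y' :
  symp_scale (x * y' - x' * y)
  = symp_scale x * symp_scale y' - symp_scale x' * symp_scale y.
Proof.
rewrite {1}/symp_scale g_det !(symp_X x) !(symp_X x') !(symp_Y x) !(symp_Y x').
by rewrite symp_g1_det; field.
Qed.

Lemma symp_scale0 : symp_scale 0 = 0.
Proof. by rewrite /symp_scale symp_g0 mul0r. Qed.

Lemma symp_scale1 : symp_scale 1 = 1.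
Proof. by rewrite /symp_scale divff ?symp_g1_neq0. Qed.

Lemma symp_scale_zmod : zmod_morphism symp_scale.
Proof.
move=> a b; have -> : a - b = a * 1 - b * 1 by ring.
by rewrite symp_scale_det symp_scale1 !mulr1.
Qed.

Lemma symp_scale_monoid : monoid_morphism symp_scale.
Proof.
split=> [|a b]; first exact: symp_scale1.
have -> : a * b = a * b - 0 * 1 by ring.
by rewrite symp_scale_det symp_scale0 mul0r subr0.
Qed.

Lemma symp_scale_inj : injective symp_scale.
Proof. by move=> a b /(divIf symp_g1_neq0)/g_inj. Qed.

Lemma symp_scale_surj :
  (forall u v, exists x y, X x y = u /\ Y x y = v) -> forall c, exists x, symp_scale x = c.
Proof.
move=> XY_surj c; have [x [y [EX EY]]] := XY_surj (X 1 0 * c) (Y 1 0 * c).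
have EX' : X 1 0 * symp_scale x + X 0 1 * symp_scale y = X 1 0 * c + X 0 1 * 0.
  by rewrite -symp_X EX mulr0 addr0.
have EY' : Y 1 0 * symp_scale x + Y 0 1 * symp_scale y = Y 1 0 * c + Y 0 1 * 0.
  by rewrite -symp_Y EY mulr0 addr0.
by exists x; have [] := det2_inj det_neq0 EX' EY'.
Qed.

HB.instance Definition _ := GRing.isZmodMorphism.Build F F symp_scale symp_scale_zmod.
HB.instance Definition _ := GRing.isMonoidMorphism.Build F F symp_scale symp_scale_monoid.

Definition symp_aut : {rmorphism F -> F} := symp_scale.

End SymplecticPair.

Section PCmapInduced.
Variables (F : fieldType) (phi : 'M[F]_3 -> 'M[F]_3).
Hypothesis phi_PC : PCmap phi.

Let phi_UT3 a : UT3 a -> UT3 (phi a). Proof. by case: phi_PC => H _ _ _; apply: H. Qed.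
Let phi_inj a b : UT3 a -> UT3 b -> phi a = phi b -> a = b.
Proof. by case: phi_PC => _ H _ _; apply: H. Qed.
Let phi_surj b : UT3 b -> exists a, UT3 a /\ phi a = b.
Proof. by case: phi_PC => _ _ H _; apply: H. Qed.
Let phi_comm3 a b : UT3 a -> UT3 b -> phi (comm3 a b) = comm3 (phi a) (phi b).
Proof. by case: phi_PC => _ _ _ H; apply: H. Qed.

Definition center_ind c := a13 (phi (ut3 0 0 c)).
Definition ab_ind12 x y := a12 (phi (ut3 x y 0)).
Definition ab_ind23 x y := a23 (phi (ut3 x y 0)).

Lemma phi_symp a b : UT3 a -> UT3 b ->
  phi (ut3 0 0 (symp a b)) = ut3 0 0 (symp (phi a) (phi b)).
Proof. by move=> Ua Ub; rewrite -comm3_UT3 // phi_comm3 // comm3_UT3 //; apply: phi_UT3. Qed.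

Lemma phi_center c : phi (ut3 0 0 c) = ut3 0 0 (center_ind c).
Proof.
have := phi_symp (ut3_UT3 c 0 0) (ut3_UT3 0 1 0).
by rewrite symp_ut3 mulr1 mul0r subr0 /center_ind => ->; rewrite a13_ut3.
Qed.

Lemma center_ind_symp a b : UT3 a -> UT3 b -> center_ind (symp a b) = symp (phi a) (phi b).
Proof. by move=> Ua Ub; rewrite /center_ind phi_symp // a13_ut3. Qed.

Lemma center_ind_inj : injective center_ind.
Proof.
move=> c c' Ec; suff /ut3_inj[] : ut3 0 0 c = ut3 0 0 c' by [].
by apply: phi_inj; rewrite ?phi_center ?Ec //; apply: ut3_UT3.
Qed.

(* [symp (phi a) (phi w)] only depends on [a12 a] and [a23 a], and by surjectivity
   [phi w] can be taken to be either generator of [F^2]. *)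
Lemma phi_UT3E a : UT3 a ->
  phi a = ut3 (ab_ind12 (a12 a) (a23 a)) (ab_ind23 (a12 a) (a23 a)) (a13 (phi a)).
Proof.
move=> Ua; set b := ut3 (a12 a) (a23 a) 0; have Ub : UT3 b by apply: ut3_UT3.
have symp_ab w : UT3 w -> symp (phi a) (phi w) = symp (phi b) (phi w).
  by move=> Uw; rewrite -!center_ind_symp // /symp /b a12_ut3 a23_ut3.
have [w1 [Uw1 Ew1]] := phi_surj (ut3_UT3 1 0 0).
have [w2 [Uw2 Ew2]] := phi_surj (ut3_UT3 0 1 0).
move: (symp_ab _ Uw1) (symp_ab _ Uw2); rewrite /symp Ew1 Ew2 !a12_ut3 !a23_ut3.
rewrite !mulr1 !mul0r !subr0 !mulr0 !mul1r !sub0r => /oppr_inj E23 E12.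
by rewrite {1}(UT3E (phi_UT3 Ua)) E12 E23.
Qed.

Lemma center_ind_det x y x' y' :
  center_ind (x * y' - x' * y)
  = ab_ind12 x y * ab_ind23 x' y' - ab_ind12 x' y' * ab_ind23 x y.
Proof. by rewrite -(symp_ut3 x y 0 x' y' 0) center_ind_symp //; apply: ut3_UT3. Qed.

Lemma ab_ind_surj u v : exists x y, ab_ind12 x y = u /\ ab_ind23 x y = v.
Proof.
have [a [Ua /esym Ea]] := phi_surj (ut3_UT3 u v 0).
exists (a12 a), (a23 a).
by move: Ea; rewrite (phi_UT3E Ua) => /ut3_inj[-> -> _].
Qed.

Definition ind_aut : {rmorphism F -> F} := symp_aut center_ind_det center_ind_inj.

Lemma ind_aut_bij : bijective ind_aut.
Proof.
apply: inj_surj_bij; first exact: symp_scale_inj center_ind_det center_ind_inj.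
exact: symp_scale_surj center_ind_det center_ind_inj ab_ind_surj.
Qed.

Lemma ind_det_neq0 : ab_ind12 1 0 * ab_ind23 0 1 - ab_ind12 0 1 * ab_ind23 1 0 != 0.
Proof.
by rewrite -(symp_g1_det center_ind_det) (symp_g1_neq0 center_ind_det center_ind_inj).
Qed.

Variables (ind_aut_inv : F -> F) (ind_aut_invK : cancel ind_aut_inv ind_aut).

Definition center_correction a := ind_aut_inv (a13 (phi a) / center_ind 1) - a13 a.

Lemma phi_factor a : UT3 a ->
  phi a = permutable_map (ab_ind12 1 0) (ab_ind12 0 1) (ab_ind23 1 0) (ab_ind23 0 1)
            (field_aut_map ind_aut (central_map center_correction a)).
Proof.
move=> Ua; have -> : central_map center_correction a
    = ut3 (a12 a) (a23 a) (ind_aut_inv (a13 (phi a) / center_ind 1)).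
  by rewrite /central_map {1}(UT3E Ua) mul_ut3_t13 /center_correction addrC subrK.
rewrite permutable_aut_ut3 ind_aut_invK {1}(phi_UT3E Ua).
rewrite (symp_X center_ind_det center_ind_inj) (symp_Y center_ind_det center_ind_inj).
congr ut3; rewrite -(symp_g1_det center_ind_det) mulrC divfK //.
exact: symp_g1_neq0 center_ind_det center_ind_inj.
Qed.

End PCmapInduced.

Theorem mainTheorem9 (F : fieldType) (hchar : (2%:R : F) != 0)
  (phi : 'M[F]_3 -> 'M[F]_3) (hphi : PCmap phi) :
  exists (al be ga de : F) (theta : {rmorphism F -> F}) (f : 'M[F]_3 -> F),
    [/\ al * de - be * ga != 0,
        bijective theta,
        PCmap (central_map f) &
        forall a : 'M[F]_3, UT3 a ->
          phi a = permutable_map al be ga de (field_aut_map theta (central_map f a))].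
Proof.
have [theta_inv _ theta_invK] := ind_aut_bij hphi.
have phiE := phi_factor theta_invK.
have det_neq0 := ind_det_neq0 hphi.
exists (ab_ind12 phi 1 0), (ab_ind12 phi 0 1), (ab_ind23 phi 1 0), (ab_ind23 phi 0 1).
exists (ind_aut hphi), (center_correction phi theta_inv); split=> //.
- exact: ind_aut_bij.
- apply: (PCmap_factor (P := fun a => permutable_map _ _ _ _ (field_aut_map _ a)) hphi)
    phiE => [a _ | | |]; first exact: ut3_UT3.
  + exact: permutable_aut_inj det_neq0 (bij_inj (ind_aut_bij hphi)).
  + exact: permutable_aut_comm3.
  + exact: central_map_UT3.
Qed.
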